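(* Let $M$ be a finite-horizon MDP and $\mathcal D$ an arbitrary offline dataset of trajectories. For every policy $\pi$, $$p_{out}^{M,\mathcal D}(\pi)\le H\Big(\|\rho_\pi^M(s)-\rho_\pi^{M_{\mathcal D}}(s)\|_1+\|\rho_\pi^M(s,a,r)-\rho_\pi^{M_{\mathcal D}}(s,a,r)\|_1\Big).$$
   Context: $M=(\mathcal S,\mathcal A,\mathcal R,H,P,R)$ is a finite-horizon MDP with finite spaces, fixed initial state $s_0$, state space partitioned into disjoint layers $\mathcal S_h$ by timestep. Visitation distributions: $\rho_\pi(s_0)=1/H$, $\rho_\pi(s)=\sum_{\tilde s\in\mathcal S_{h-1},\tilde a}\rho_\pi(\tilde s)\pi(\tilde a\mid\tilde s)P(s\mid\tilde s,\tilde a)$ for $s\in\mathcal S_h$, $h>0$, and $\rho_\pi(s,a,r)=\rho_\pi(s)\pi(a\mid s)R(r\mid s,a)$; the $\ell_1$ norms are over all states, resp. all triples $(s,a,r)$. $M_{\mathcal D}$ is the dataset-induced MDP with empirical transitions $N(s,a,s')/N(s,a)$ and rewards $N(s,a,r)/N(s,a)$ when $N(s,a)>0$ and $0$ otherwise ($N$ counts occurrences in $\mathcal D$). $p_{out}^{M,\mathcal D}(\pi)=\sum_{\tau_H}p_\pi^M(\tau_H)\,\mathbf 1[\exists t: s_t\notin\mathcal D\text{ or }(s_t,a_t,r_t)\notin\mathcal D]$ is the probability that an $H$-step trajectory $\tau_H=(s_0,a_0,r_0,\dots,s_{H-1},a_{H-1},r_{H-1})$ generated by $\pi$ in $M$ contains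 a state or a state-action-reward triple not appearing in $\mathcal D$. *)

From HB Require Import structures.
From mathcomp Require Import all_boot all_order all_algebra.
Set Implicit Arguments. Unset Strict Implicit. Unset Printing Implicit Defensive.
Import Order.TTheory GRing.Theory Num.Theory.
Local Open Scope ring_scope.

(* Transition kernel  P s a s' = P(s' | s, a),
   reward kernel      Rr s a r = R(r | s, a),
   policy             pi s a   = pi(a | s),
   layering           layer s  = the timestep h with s \in S_h (h < H). *)

Section Defs.
Variables (R : realFieldType) (S A Rw : finType) (H : nat).
Variable (layer : S -> 'I_H) (s0 : S).
Variable (pi : S -> A -> R).

Fixpoint rho_h (P : S -> A -> S -> R) (h : nat) (s : S) : R :=
  match h with
  | 0 => if s == s0 then (H%:R)^-1 else 0
  | h'.+1 => \sum_(st : S | nat_of_ord (layer st) == h')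
               \sum_(a0 : A) rho_h P h' st * pi st a0 * P st a0 s
  end.

Definition rho_s (P : S -> A -> S -> R) (s : S) : R := rho_h P (layer s) s.

Definition rho_sar (P : S -> A -> S -> R) (Rr : S -> A -> Rw -> R)
  (x : S * A * Rw) : R :=
  rho_s P x.1.1 * pi x.1.1 x.1.2 * Rr x.1.1 x.1.2 x.2.

Definition dataset := seq (seq (S * A * Rw)).

Definition N_sar (D : dataset) (x : S * A * Rw) : nat :=
  \sum_(tau <- D) count (pred1 x) tau.
Definition N_sa (D : dataset) (s : S) (a : A) : nat :=
  \sum_(tau <- D) count (fun x : S * A * Rw => (x.1.1 == s) && (x.1.2 == a)) tau.
(* number of transitions (s_t, a_t) -> s_{t+1} = s' within trajectories *)
Definition N_sas (D : dataset) (s : S) (a : A) (s' : S) : nat :=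
  \sum_(tau <- D)
     count (fun xy : (S * A * Rw) * (S * A * Rw) =>
              [&& xy.1.1.1 == s, xy.1.1.2 == a & xy.2.1.1 == s'])
           (zip tau (behead tau)).

Definition P_D (D : dataset) (s : S) (a : A) (s' : S) : R :=
  if (0 < N_sa D s a)%N then (N_sas D s a s')%:R / (N_sa D s a)%:R else 0.
Definition R_D (D : dataset) (s : S) (a : A) (r : Rw) : R :=
  if (0 < N_sa D s a)%N then (N_sar D (s, a, r))%:R / (N_sa D s a)%:R else 0.

Definition state_in_D (D : dataset) (s : S) : bool :=
  has (fun tau => has (fun x : S * A * Rw => x.1.1 == s) tau) D.
Definition triple_in_D (D : dataset) (x : S * A * Rw) : bool :=
  has (fun tau => x \in tau) D.

Definition traj_prob (P : S -> A -> S -> R) (Rr : S -> A -> Rw -> R)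
  (tau : {ffun 'I_H -> S * A * Rw}) : R :=
  (if [forall t : 'I_H, (nat_of_ord t == 0)%N ==> ((tau t).1.1 == s0)]
   then 1 else 0)
  * (\prod_(t : 'I_H) (pi (tau t).1.1 (tau t).1.2 * Rr (tau t).1.1 (tau t).1.2 (tau t).2))
  * (\prod_(t : 'I_H) \prod_(u : 'I_H | nat_of_ord u == (nat_of_ord t).+1)
        P (tau t).1.1 (tau t).1.2 (tau u).1.1).

Definition p_out (P : S -> A -> S -> R) (Rr : S -> A -> Rw -> R) (D : dataset) : R :=
  \sum_(tau : {ffun 'I_H -> S * A * Rw})
     traj_prob P Rr tau *
     (if [exists t : 'I_H, ~~ state_in_D D (tau t).1.1 || ~~ triple_in_D D (tau t)]
      then 1 else 0).

Definition l1_states (P : S -> A -> S -> R) (D : dataset) : R :=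
  \sum_(s : S) `|rho_s P s - rho_s (P_D D) s|.
Definition l1_triples (P : S -> A -> S -> R) (Rr : S -> A -> Rw -> R) (D : dataset) : R :=
  \sum_(x : S * A * Rw) `|rho_sar P Rr x - rho_sar (P_D D) (R_D D) x|.
End Defs.

From HB Require Import structures.
From mathcomp Require Import all_boot all_order all_algebra.
From mathcomp Require Import ring.
Set Implicit Arguments. Unset Strict Implicit. Unset Printing Implicit Defensive.
Import Order.TTheory GRing.Theory Num.Theory.
Local Open Scope ring_scope.

(** Read a trajectory as a Markov chain on triples (s_t, a_t, r_t).  A state
    missing from D makes its triple missing too, so the union bound over
    timesteps gives p_out <= sum_t Pr[(s_t, a_t, r_t) is not in D]; since the
    triple of step t lies in layer t, this sum is H times the M-visitation
    mass of the triples missing from D.  The empirical reward kernel of M_D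
    vanishes on every such triple, so each of them contributes
    rho^M(s,a,r) = |rho^M(s,a,r) - rho^{M_D}(s,a,r)| to the l1 distance. *)

Definition extend_ffun (T : Type) n (tau : {ffun 'I_n.+1 -> T}) (y : T) :
    {ffun 'I_n.+2 -> T} :=
  [ffun i : 'I_n.+2 => if (i < n.+1)%N then tau (inord i) else y].

Lemma extend_ffun_init (T : Type) n (tau : {ffun 'I_n.+1 -> T}) y
    (i : 'I_n.+2) (j : 'I_n.+1) :
  i = j :> nat -> extend_ffun tau y i = tau j.
Proof.
by move=> ij; rewrite ffunE ij ltn_ord; congr (tau _); apply: val_inj; rewrite /= inordK.
Qed.

Lemma extend_ffun_last (T : Type) n (tau : {ffun 'I_n.+1 -> T}) y (i : 'I_n.+2) :
  i = n.+1 :> nat -> extend_ffun tau y i = y.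
Proof. by move=> iE; rewrite ffunE iE ltnn. Qed.

Lemma sum_ffunS (V : nmodType) (T : finType) n (F : {ffun 'I_n.+2 -> T} -> V) :
  \sum_tau F tau = \sum_(tau : {ffun 'I_n.+1 -> T}) \sum_y F (extend_ffun tau y).
Proof.
rewrite pair_big (reindex (fun p => extend_ffun p.1 p.2)) //=.
exists (fun tau => ([ffun j => tau (widen_ord (leqnSn _) j)], tau ord_max)).
  move=> [tau y] _ /=; rewrite extend_ffun_last //; congr (_, _).
  by apply/ffunP => j; rewrite ffunE (extend_ffun_init _ _ (j := j)).
move=> tau _; apply/ffunP => i; rewrite ffunE /=.
case: ltnP => hi; first by rewrite ffunE; congr (tau _); apply: val_inj; rewrite /= inordK.
by congr (tau _); apply: val_inj; apply/eqP; rewrite /= eqn_leq hi -ltnS ltn_ord.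
Qed.

Lemma sum_ffun1 (V : nmodType) (T : finType) (F : {ffun 'I_1 -> T} -> V) :
  \sum_tau F tau = \sum_y F [ffun => y].
Proof.
rewrite (reindex (fun y => [ffun => y])) //.
exists (fun tau : {ffun _ -> T} => tau ord0) => [y _|tau _]; first by rewrite ffunE.
by apply/ffunP => i; rewrite ffunE (ord1 i).
Qed.

Section MarkovChain.
Variables (R : comPzSemiRingType) (T : finType) (init : T -> R) (K : T -> T -> R).
Hypothesis K_stoch : forall x, \sum_y K x y = 1.

Definition path_weight n (tau : {ffun 'I_n.+1 -> T}) : R :=
  init (tau ord0) * \prod_(i < n) K (tau (widen_ord (leqnSn n) i)) (tau (lift ord0 i)).

Fixpoint marginal (k : nat) (x : T) : R :=
  if k is k'.+1 then \sum_z marginal k' z * K z x else init x.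

Lemma path_weight_extend n (tau : {ffun 'I_n.+1 -> T}) y :
  path_weight (extend_ffun tau y) = path_weight tau * K (tau ord_max) y.
Proof.
rewrite /path_weight big_ord_recr /= -mulrA (extend_ffun_init _ _ (j := ord0)) //.
congr (_ * (_ * _)); last first.
  by rewrite (extend_ffun_init _ _ (j := ord_max)) // extend_ffun_last.
apply: eq_bigr => i _.
by rewrite (extend_ffun_init _ _ (j := widen_ord (leqnSn _) i)) //
           (extend_ffun_init _ _ (j := lift ord0 i)).
Qed.

Lemma sum_path_weight_eval n (k : 'I_n.+1) (g : T -> R) :
  \sum_tau path_weight tau * g (tau k) = \sum_x marginal k x * g x.
Proof.
elim: n k g => [|n IH] k g.
  rewrite sum_ffun1 (ord1 k); apply: eq_bigr => y _.
  by rewrite /path_weight big_ord0 mulr1 !ffunE.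
rewrite sum_ffunS; under eq_bigr do under eq_bigr do rewrite path_weight_extend.
have [hk|] := ltnP k n.+1.
  rewrite -(IH (Ordinal hk)); apply: eq_bigr => tau _.
  under eq_bigr do rewrite (extend_ffun_init _ _ (j := Ordinal hk)) //.
  by rewrite -mulr_suml -mulr_sumr K_stoch mulr1 mulrAC.
move=> hk; have {}hk : k = n.+1 :> nat by apply/eqP; rewrite eqn_leq hk -ltnS ltn_ord.
under eq_bigr do under eq_bigr do rewrite extend_ffun_last // -mulrA.
rewrite hk.
under eq_bigr do rewrite -mulr_sumr.
rewrite (IH ord_max (fun z => \sum_y K z y * g y)) /=.
under eq_bigr do rewrite mulr_sumr.
rewrite exchange_big /=; apply: eq_bigr => y _.
by rewrite mulr_suml; apply: eq_bigr => z _; rewrite mulrA.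
Qed.

End MarkovChain.

Lemma sum_triple (V : nmodType) (S A Rw : finType) (F : S * A * Rw -> V) :
  \sum_x F x = \sum_s \sum_a \sum_r F (s, a, r).
Proof. by rewrite pair_big /= pair_big /=; apply: eq_bigr => -[[s a] r]. Qed.

Lemma exists_le_sum (R : numDomainType) (I : finType) (b : pred I) :
  (if [exists i, b i] then 1 else 0) <= \sum_i (if b i then 1 else 0) :> R.
Proof.
have ind_ge0 i : 0 <= (if b i then 1 else 0) :> R by case: (b i).
case: existsP => [[i bi]|_]; last exact: sumr_ge0.
by rewrite (bigD1 i) //= bi lerDl sumr_ge0.
Qed.

Section Dataset.
Variables (R : realFieldType) (S A Rw : finType) (D : dataset S A Rw).

Lemma triple_in_D_state (x : S * A * Rw) : triple_in_D D x -> state_in_D D x.1.1.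
Proof.
by case/hasP => tau tauD xtau; apply/hasP; exists tau => //; apply/hasP; exists x.
Qed.

Lemma R_D_missing (s : S) (a : A) (r : Rw) :
  ~~ triple_in_D D (s, a, r) -> R_D R D s a r = 0.
Proof.
move=> /hasPn notin; rewrite /R_D /N_sar big_seq big1 ?mul0r ?if_same // => tau tauD.
exact/count_memPn/notin.
Qed.

Lemma rho_sar_D_missing H (layer : S -> 'I_H) s0 (pi : S -> A -> R) x :
  ~~ triple_in_D D x -> rho_sar layer s0 pi (P_D R D) (R_D R D) x = 0.
Proof. by case: x => [[s a] r] /R_D_missing; rewrite /rho_sar /= => ->; rewrite mulr0. Qed.

Lemma sum_missing_le_l1_triples H (layer : S -> 'I_H) s0 (pi : S -> A -> R)
    (P : S -> A -> S -> R) (Rr : S -> A -> Rw -> R) :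
  \sum_(x | ~~ triple_in_D D x) rho_sar layer s0 pi P Rr x
    <= l1_triples layer s0 pi P Rr D.
Proof.
rewrite /l1_triples [leRHS](bigID (fun x => ~~ triple_in_D D x)) /=.
rewrite -[leLHS]addr0 lerD ?sumr_ge0 //; apply: ler_sum => x missing.
by rewrite rho_sar_D_missing // subr0 ler_norm.
Qed.

End Dataset.

Section LayeredMDP.
Variables (R : realFieldType) (S A Rw : finType) (n : nat).
Variables (layer : S -> 'I_n.+1) (s0 : S).
Variables (P : S -> A -> S -> R) (Rr : S -> A -> Rw -> R) (pi : S -> A -> R).
Hypothesis P_ge0 : forall s a s', 0 <= P s a s'.
Hypothesis P_stoch : forall s a, \sum_s' P s a s' = 1.
Hypothesis Rr_ge0 : forall s a r, 0 <= Rr s a r.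
Hypothesis Rr_stoch : forall s a, \sum_r Rr s a r = 1.
Hypothesis pi_ge0 : forall s a, 0 <= pi s a.
Hypothesis pi_stoch : forall s, \sum_a pi s a = 1.
Hypothesis layer_s0 : nat_of_ord (layer s0) = 0%N.
Hypothesis layer_P : forall s a s', P s a s' != 0 -> ((layer s).+1 < n.+1)%N ->
  nat_of_ord (layer s') = (layer s).+1.

Definition step_prob (x : S * A * Rw) : R := pi x.1.1 x.1.2 * Rr x.1.1 x.1.2 x.2.

Definition traj_init (x : S * A * Rw) : R := (if x.1.1 == s0 then 1 else 0) * step_prob x.

Definition traj_kernel (x y : S * A * Rw) : R := P x.1.1 x.1.2 y.1.1 * step_prob y.

Lemma traj_kernel_stoch x : \sum_y traj_kernel x y = 1.
Proof.
rewrite sum_triple -[RHS](P_stoch x.1.1 x.1.2); apply: eq_bigr => s _.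
rewrite -[RHS]mulr1 -(pi_stoch s) mulr_sumr; apply: eq_bigr => a _.
rewrite -[RHS]mulr1 -(Rr_stoch s a) !mulr_sumr; apply: eq_bigr => r _.
by rewrite /traj_kernel /step_prob mulrA.
Qed.

Lemma traj_probE (tau : {ffun 'I_n.+1 -> S * A * Rw}) :
  traj_prob s0 pi P Rr tau = path_weight traj_init traj_kernel tau.
Proof.
rewrite /traj_prob /path_weight /traj_init.
have -> : [forall t : 'I_n.+1, (nat_of_ord t == 0)%N ==> ((tau t).1.1 == s0)]
          = ((tau ord0).1.1 == s0).
  apply/forallP/idP => [/(_ ord0) //|tau0 t]; apply/implyP => /eqP t0.
  by rewrite (_ : t = ord0) //; apply: val_inj.
rewrite big_ord_recl big_ord_recr /=.
rewrite [X in _ * (_ * X) = _]big_pred0 => [|u]; last by rewrite eq_sym gtn_eqF.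
rewrite /step_prob mulr1 -!mulrA; congr (_ * (_ * (_ * _))).
rewrite -big_split; apply: eq_bigr => i _ /=.
rewrite (big_pred1 (lift ord0 i)) => [|u]; first by rewrite mulrC.
by rewrite /= -val_eqE /= /bump leq0n.
Qed.

Lemma traj_prob_ge0 (tau : {ffun 'I_n.+1 -> S * A * Rw}) : 0 <= traj_prob s0 pi P Rr tau.
Proof.
have step_ge0 x : 0 <= step_prob x by rewrite mulr_ge0.
rewrite traj_probE mulr_ge0 ?prodr_ge0 // => [|i _]; last by rewrite mulr_ge0.
by rewrite mulr_ge0 //; case: ifP.
Qed.

Lemma rho_h_off_layer t s : (t < n.+1)%N -> nat_of_ord (layer s) != t ->
  rho_h layer s0 pi P t s = 0.
Proof.
case: t => [|t] /= ht hs; first by case: (s =P s0) hs => [->|//]; rewrite layer_s0.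
apply: big1 => s' /eqP s't; apply: big1 => a _.
have [->|Pnz] := eqVneq (P s' a s) 0; first by rewrite mulr0.
by move: hs; rewrite (layer_P Pnz) s't ?eqxx.
Qed.

Lemma marginal_traj t x : (t < n.+1)%N ->
  marginal traj_init traj_kernel t x = n.+1%:R * rho_h layer s0 pi P t x.1.1 * step_prob x.
Proof.
elim: t x => [|t IH] x ht /=.
  rewrite /traj_init; case: ifP => _; last by rewrite !mulr0 mul0r.
  by rewrite mulfV ?pnatr_eq0.
under eq_bigr do rewrite IH 1?ltnW //.
rewrite sum_triple (bigID (fun s => nat_of_ord (layer s) == t)) /=.
rewrite [X in _ + X]big1 ?addr0 => [|s off]; last first.
  by do 2![apply: big1 => ? _]; rewrite rho_h_off_layer 1?ltnW // mulr0 !mul0r.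
rewrite mulr_sumr mulr_suml; apply: eq_bigr => s _.
rewrite mulr_sumr mulr_suml; apply: eq_bigr => a _.
rewrite -[RHS]mulr1 -(Rr_stoch s a) mulr_sumr; apply: eq_bigr => r _.
rewrite /traj_kernel /step_prob /=; ring.
Qed.

Lemma sum_marginal_traj x :
  \sum_(t < n.+1) marginal traj_init traj_kernel t x
    = n.+1%:R * rho_sar layer s0 pi P Rr x.
Proof.
rewrite (bigD1 (layer x.1.1)) //= big1 ?addr0 => [|t off]; last first.
  rewrite marginal_traj // rho_h_off_layer // ?mulr0 ?mul0r //.
  by apply: contra off => /eqP lt; apply/eqP/val_inj.
by rewrite marginal_traj // /rho_sar /rho_s /step_prob !mulrA.
Qed.

Lemma p_out_le_missing (D : dataset S A Rw) :
  p_out n.+1 s0 pi P Rr D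
    <= n.+1%:R * \sum_(x | ~~ triple_in_D D x) rho_sar layer s0 pi P Rr x.
Proof.
pose missing x : R := if ~~ triple_in_D D x then 1 else 0.
have union_bound (tau : {ffun 'I_n.+1 -> S * A * Rw}) :
    (if [exists t, ~~ state_in_D D (tau t).1.1 || ~~ triple_in_D D (tau t)]
     then 1 else 0) <= \sum_t missing (tau t).
  rewrite (@eq_existsb _ _ (fun t => ~~ triple_in_D D (tau t))) => [|t].
    exact: exists_le_sum.
  by case: (boolP (triple_in_D D (tau t))) => [/triple_in_D_state ->|_]; rewrite ?orbT.
apply: (le_trans (y := \sum_tau traj_prob s0 pi P Rr tau * \sum_t missing (tau t))).
  by apply: ler_sum => tau _; rewrite ler_wpM2l ?traj_prob_ge0.
under eq_bigr do rewrite traj_probE mulr_sumr.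
rewrite exchange_big /=.
under eq_bigr do rewrite (sum_path_weight_eval _ traj_kernel_stoch).
rewrite exchange_big /= mulr_sumr [leRHS]big_mkcond /=; apply: ler_sum => x _.
by rewrite -mulr_suml sum_marginal_traj /missing; case: ifP; rewrite ?mulr0 ?mulr1.
Qed.

End LayeredMDP.

Theorem lemma4 (R : realFieldType) (S A Rw : finType) (H : nat)
  (layer : S -> 'I_H) (s0 : S)
  (P : S -> A -> S -> R) (Rr : S -> A -> Rw -> R) (pi : S -> A -> R)
  (D : dataset S A Rw) :
  (* P, R and pi are probability distributions *)
  (forall s a s', 0 <= P s a s') ->
  (forall s a, \sum_(s' : S) P s a s' = 1) ->
  (forall s a r, 0 <= Rr s a r) ->
  (forall s a, \sum_(r : Rw) Rr s a r = 1) ->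
  (forall s a, 0 <= pi s a) ->
  (forall s, \sum_(a : A) pi s a = 1) ->
  (* layered structure: s0 in S_0, transitions go from S_h to S_{h+1} *)
  nat_of_ord (layer s0) = 0%N ->
  (forall s a s', P s a s' != 0 -> ((layer s).+1 < H)%N ->
     nat_of_ord (layer s') = (layer s).+1) ->
  p_out H s0 pi P Rr D <=
    H%:R * (l1_states layer s0 pi P D + l1_triples layer s0 pi P Rr D).
Proof.
move=> P_ge0 P_stoch Rr_ge0 Rr_stoch pi_ge0 pi_stoch.
case: H layer => [|n] layer layer_s0 layer_P; first by case: (layer s0).
apply: le_trans (p_out_le_missing P_ge0 P_stoch Rr_ge0 Rr_stoch pi_ge0 pi_stoch
                   layer_s0 layer_P D) _.
rewrite ler_wpM2l // (le_trans (sum_missing_le_l1_triples _ _ _ _ _ _)) //.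
by rewrite lerDr sumr_ge0.
Qed.
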